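(* Let $D_5$ be the undirected tree with vertices $v,a,b,c,d$ and edges $va,vb,vc,cd$. Every finite connected undirected graph without loops, without multiple edges, and without subgraphs isomorphic to $D_5$ is one of the following: a cycle with $l\ge 3$ vertices; a path (chain) with $l\ge 0$ edges; a star $K_{1,l}$ with $l\ge 3$ edges; or a connected graph with four vertices.
   Context: ''Subgraph'' means an arbitrary (not necessarily induced) subgraph. *)

From mathcomp Require Import all_boot.
Set Implicit Arguments. Unset Strict Implicit. Unset Printing Implicit Defensive.

Definition simple_graph (T : finType) (e : rel T) : Prop :=
  symmetric e /\ irreflexive e.

Definition connected_graph (T : finType) (e : rel T) : Prop :=
  0 < #|T| /\ forall x y : T, connect e x y.

(* D_5: v=0, a=1, b=2, c=3, d=4; edges va, vb, vc, cd *)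
Definition D5_edge (i j : 'I_5) : bool :=
  [|| [&& val i == 0 & val j == 1],
      [&& val i == 0 & val j == 2],
      [&& val i == 0 & val j == 3] | [&& val i == 3 & val j == 4] ].

(* e has a (not necessarily induced) subgraph isomorphic to D_5:
   an injective vertex map sending every D_5 edge to an edge *)
Definition has_D5_subgraph (T : finType) (e : rel T) : Prop :=
  exists f : 'I_5 -> T, injective f /\
    forall i j : 'I_5, D5_edge i j -> e (f i) (f j).

Definition graph_iso {V T : finType} (g : rel V) (e : rel T) : Prop :=
  exists f : V -> T, bijective f /\ forall x y : V, e (f x) (f y) = g x y.

Definition cycle_rel (l : nat) : rel 'I_l :=
  fun i j => ((val i).+1 %% l == val j) || ((val j).+1 %% l == val i).

Definition path_rel (l : nat) : rel 'I_l.+1 :=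
  fun i j => ((val i).+1 == val j) || ((val j).+1 == val i).

Definition star_rel (l : nat) : rel 'I_l.+1 :=
  fun i j => (val i == 0) (+) (val j == 0).
Arguments cycle_rel l : clear implicits.
Arguments path_rel l : clear implicits.
Arguments star_rel l : clear implicits.

From mathcomp Require Import all_boot fingroup perm zify.
From Stdlib Require Import Classical.
Set Implicit Arguments. Unset Strict Implicit. Unset Printing Implicit Defensive.

(* If no vertex has three distinct neighbours, take a longest simple path
   p_0 ... p_m: its endpoints have all their neighbours on it, and an interior
   vertex p_i has no neighbours besides p_(i-1) and p_(i+1). By connectivity
   the path spans the graph, and the only possible further edge is p_0 p_m,
   so the graph is a path or a cycle.
   Otherwise some vertex v has three distinct neighbours. If there are at
   least five vertices, then a vertex at distance 2 from v, or an edge between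
   two vertices other than v, together with two further neighbours of v forms
   a D_5; hence the graph is the star centred at v. *)

Section SimplePaths.

Variables (T : finType) (e : rel T).

Definition simple_path (m : nat) (p : nat -> T) :=
  (forall i j, i <= m -> j <= m -> p i = p j -> i = j) /\
  (forall i, i < m -> e (p i) (p i.+1)).

Definition maximal_simple_path m p :=
  simple_path m p /\ ~ exists q, simple_path m.+1 q.

Lemma simple_path_card m p : simple_path m p -> m < #|T|.
Proof.
case=> p_inj _; pose q (i : 'I_m.+1) := p i.
have q_inj : injective q by move=> i j /(p_inj _ _ (ltn_ord i) (ltn_ord j))/val_inj.
by move/leq_card: q_inj; rewrite card_ord.
Qed.

Lemma simple_path_rev m p :
  symmetric e -> simple_path m p -> simple_path m (fun i => p (m - i)).
Proof.
move=> e_sym [p_inj p_edge]; split=> [i j im jm /p_inj|i im]; first lia.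
by rewrite e_sym (_ : m - i = (m - i.+1).+1); [apply: p_edge|]; lia.
Qed.

Lemma simple_path_extend m p y :
  simple_path m p -> (forall i, i <= m -> p i <> y) -> e (p m) y ->
  simple_path m.+1 (fun i => if i == m.+1 then y else p i).
Proof.
move=> [p_inj p_edge] y_off e_my; split=> [i j im jm|i im].
  case: eqP => [->|ni]; case: eqP => [->|nj] //.
  - by move=> /esym pj_y; case: (y_off j _ pj_y); lia.
  - by move=> pi_y; case: (y_off i _ pi_y); lia.
  - by apply: p_inj; lia.
rewrite ifN; last lia.
by case: eqP => [[->]|ni] //; apply: p_edge; lia.
Qed.

Lemma exists_maximal_simple_path (x0 : T) : exists m p, maximal_simple_path m p.
Proof.
apply: NNPP => no_max.
have extend m : (exists p, simple_path m p) -> exists q, simple_path m.+1 q.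
  by move=> [p p_path]; apply: NNPP => no_ext; apply: no_max; exists m, p.
have all_lengths m : exists p, simple_path m p.
  elim: m => [|m IHm]; last exact: extend.
  by exists (fun=> x0); split=> [i j|i]; lia.
by have [p /simple_path_card] := all_lengths #|T|; rewrite ltnn.
Qed.

Lemma maximal_path_last_nbr m p y :
  maximal_simple_path m p -> e (p m) y -> exists2 i, i <= m & p i = y.
Proof.
move=> [p_path p_max] e_my; apply: NNPP => y_off; apply: p_max.
by eexists; apply: simple_path_extend p_path _ e_my => i im pi_y; apply: y_off; exists i.
Qed.

Lemma maximal_path_first_nbr m p y :
  symmetric e -> maximal_simple_path m p -> e (p 0) y ->
  exists2 i, i <= m & p i = y.
Proof.
move=> e_sym [p_path p_max] e_0y.
have rev_max : maximal_simple_path m (fun i => p (m - i)).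
  by split; first exact: simple_path_rev.
have [|i im <-] := maximal_path_last_nbr rev_max (_ : e _ y); first by rewrite subnn.
by exists (m - i); rewrite ?leq_subr.
Qed.

End SimplePaths.

Definition has_claw (T : finType) (e : rel T) :=
  exists v a b c, [/\ e v a, e v b, e v c & uniq [:: a; b; c]].

Lemma no_claw_nbr (T : finType) (e : rel T) v a b c :
  ~ has_claw e -> e v a -> e v b -> e v c -> a != b -> (c == a) || (c == b).
Proof.
move=> no_claw e_va e_vb e_vc ab; apply/norP => -[ca cb]; apply: no_claw.
by exists v, a, b, c; split; rewrite //= !inE negb_or ab (eq_sym a) (eq_sym b) ca cb.
Qed.

Lemma succ_modS i m : i <= m -> i.+1 %% m.+1 = if i == m then 0 else i.+1.
Proof. by case: eqP => [->|ne] im; rewrite ?modnn // modn_small //; lia. Qed.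

Section ClawFree.

Variables (T : finType) (e : rel T).
Hypotheses (e_sym : symmetric e) (e_irr : irreflexive e).
Hypotheses (e_conn : forall x y, connect e x y) (no_claw : ~ has_claw e).
Variables (m : nat) (p : nat -> T).
Hypothesis p_max : maximal_simple_path e m p.

Let p_inj i j : i <= m -> j <= m -> p i = p j -> i = j.
Proof. exact: p_max.1.1. Qed.

Let p_edge i : i < m -> e (p i) (p i.+1).
Proof. exact: p_max.1.2. Qed.

Let p_ord (i : 'I_m.+1) : T := p i.

Lemma interior_nbr i y : 0 < i < m -> e (p i) y -> y = p i.-1 \/ y = p i.+1.
Proof.
case: i => [//|i] /= im e_y.
have e_prev : e (p i.+1) (p i) by rewrite e_sym; apply: p_edge; lia.
have e_next : e (p i.+1) (p i.+2) by apply: p_edge.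
have: (y == p i) || (y == p i.+2).
  by apply: no_claw_nbr no_claw e_prev e_next e_y _; apply/eqP => /p_inj; lia.
by case/orP=> /eqP ->; [left|right].
Qed.

Lemma path_nbr i y : i <= m -> e (p i) y -> exists2 j, j <= m & p j = y.
Proof.
move=> im e_y; have [i0|i_gt0] := posnP i.
  by rewrite i0 in e_y; apply: maximal_path_first_nbr e_sym p_max e_y.
have [im'|i_ltm] := eqVneq i m.
  by rewrite im' in e_y; apply: maximal_path_last_nbr p_max e_y.
case: (@interior_nbr i y) => // [|->|->]; first lia.
- by exists i.-1; first lia.
- by exists i.+1; first lia.
Qed.

Lemma path_covers y : y \in codom p_ord.
Proof.
have p_ord_closed : closed e (codom p_ord).
  apply: (intro_closed (sym_connect_sym e_sym)) => x z /[swap] /codomP[i ->] e_iz.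
  have [j jm <-] := path_nbr (ltn_ord i) e_iz.
  by apply/codomP; exists (Ordinal (jm : j < m.+1)).
rewrite -(closed_connect p_ord_closed (e_conn (p 0) y)).
by apply/codomP; exists ord0.
Qed.

Lemma p_ord_bij : bijective p_ord.
Proof.
have p_ord_inj : injective p_ord by move=> i j /(p_inj (ltn_ord i) (ltn_ord j))/val_inj.
apply: (inj_card_bij p_ord_inj); rewrite -(card_codom p_ord_inj).
by apply/subset_leq_card/subsetP => y _; apply: path_covers.
Qed.

Lemma chord_ends i j : i <= m -> j <= m -> e (p i) (p j) ->
  [|| i.+1 == j, j.+1 == i, (i == 0) && (j == m) | (i == m) && (j == 0)].
Proof.
move=> im jm e_ij.
have [i_int|] := boolP (0 < i < m).
  by case: (interior_nbr i_int e_ij) => /p_inj; lia.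
have [j_int|] := boolP (0 < j < m).
  by rewrite e_sym in e_ij; case: (interior_nbr j_int e_ij) => /p_inj; lia.
have: i != j by apply: contraTneq e_ij => ->; rewrite e_irr.
lia.
Qed.

Lemma path_edgeE i j : i <= m -> j <= m ->
  e (p i) (p j) = [|| i.+1 == j, j.+1 == i |
                      e (p 0) (p m) && ((i == 0) && (j == m) || (i == m) && (j == 0))].
Proof.
move=> im jm; apply/idP/idP => [e_ij|].
  case/or4P: (chord_ends im jm e_ij)
    => [->//|->|/andP[/eqP i0 /eqP jm']|/andP[/eqP im' /eqP j0]].
  - by rewrite orbT.
  - by rewrite -i0 -jm' e_ij !eqxx !orbT.
  - by rewrite -im' -j0 e_sym e_ij !eqxx !orbT.
case/or3P => [/eqP ji|/eqP ij|/andP[e_0m /orP[]/andP[/eqP-> /eqP->]]] //.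
- by rewrite -ji; apply: p_edge; rewrite -ji in jm.
- by rewrite -ij e_sym; apply: p_edge; rewrite -ij in im.
- by rewrite e_sym.
Qed.

Lemma claw_free_cycle_or_path :
  (exists l, 3 <= l /\ graph_iso (cycle_rel l) e) \/
  (exists l, graph_iso (path_rel l) e).
Proof.
have [/andP[e_0m m_ge2]|no_cycle] := boolP (e (p 0) (p m) && (2 <= m)).
  left; exists m.+1; split=> //; exists p_ord.
  split=> [|[i im] [j jm]]; first exact: p_ord_bij.
  rewrite /p_ord /cycle_rel path_edgeE //= e_0m !succ_modS //.
  by case: (i =P m); case: (j =P m) => ? ?; apply/idP/idP; lia.
have m_eq1 : e (p 0) (p m) -> m = 1.
  move=> e_0m; have [m0|] := posnP m; first by rewrite m0 e_irr in e_0m.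
  by move: no_cycle; rewrite e_0m; lia.
right; exists m; exists p_ord; split=> [|[i im] [j jm]]; first exact: p_ord_bij.
rewrite /p_ord /path_rel path_edgeE //=.
by case: (e (p 0) (p m)) m_eq1 => [/(_ isT) m1|_] /=; rewrite ?orbF ?m1; lia.
Qed.

End ClawFree.

Lemma has_D5_subgraph_uniq (T : finType) (e : rel T) v a b c d :
  uniq [:: v; a; b; c; d] -> e v a -> e v b -> e v c -> e c d ->
  has_D5_subgraph e.
Proof.
move=> vs_uniq e_va e_vb e_vc e_cd.
exists (fun i : 'I_5 => nth v [:: v; a; b; c; d] i); split.
  by move=> i j /eqP; rewrite nth_uniq // => /eqP /val_inj.
by case=> [[|[|[|[|[|i]]]]] ?] [[|[|[|[|[|j]]]]] ?].
Qed.

Lemma star_rel_iso (T : finType) (e : rel T) v :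
  (forall x y, e x y = (x == v) (+) (y == v)) -> graph_iso (star_rel #|T|.-1) e.
Proof.
move=> eE; set n := #|T|.-1.
have Tn : #|T| = n.+1 by rewrite /n prednK //; apply/card_gt0P; exists v.
pose k : 'I_n.+1 := cast_ord Tn (enum_rank v).
pose f (i : 'I_n.+1) := enum_val (cast_ord (esym Tn) (tperm ord0 k i)).
have f_inj : injective f by move=> i j /enum_val_inj /cast_ord_inj /perm_inj.
have f0 : f ord0 = v by rewrite /f tpermL /k cast_ordK enum_rankK.
exists f; split=> [|x y]; first by apply: inj_card_bij; rewrite // card_ord Tn.
by rewrite eE -f0 !(inj_eq f_inj).
Qed.

Section Claw.

Variables (T : finType) (e : rel T).
Hypotheses (e_sym : symmetric e) (e_irr : irreflexive e).
Hypotheses (e_conn : forall x y, connect e x y) (no_D5 : ~ has_D5_subgraph e).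
Variables (v a b c : T).
Hypothesis claw : [/\ e v a, e v b, e v c & uniq [:: a; b; c]].

Let adj_neq x y : e x y -> x != y.
Proof. by apply: contraTneq => ->; rewrite e_irr. Qed.

Lemma claw_card : 3 < #|T|.
Proof.
have [e_va e_vb e_vc abc] := claw.
have vabc : uniq [:: v; a; b; c] by rewrite cons_uniq abc andbT !inE !negb_or !adj_neq.
by move/card_uniqP: vabc => /= <-; apply: max_card.
Qed.

Lemma claw_nbrs_avoiding u : exists a' b', [/\ e v a', e v b' & uniq [:: a'; b'; u]].
Proof.
have [e_va e_vb e_vc] := claw; rewrite /= !inE !negb_or => /and3P[/andP[ab ac] bc _].
have [->|ua] := eqVneq u a.
  by exists b, c; rewrite /= !inE !negb_or bc eq_sym ab eq_sym ac.
have [->|ub] := eqVneq u b; first by exists a, c; rewrite /= !inE !negb_or ac ab eq_sym bc.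
by exists a, b; rewrite /= !inE !negb_or ab !(eq_sym _ u) ua ub.
Qed.

Let no_D5_at a' b' x y : e v a' -> e v b' -> e v x -> e x y ->
  uniq [:: a'; b'; x] -> y \notin [:: v; a'; b'] -> False.
Proof.
move=> e_va' e_vb' e_vx e_xy; rewrite /= !inE !negb_or.
move=> /and3P[/andP[a'b' a'x] b'x _] /and3P[yv ya' yb'].
move: (adj_neq e_va') (adj_neq e_vb') (adj_neq e_vx) (adj_neq e_xy) => va' vb' vx xy.
apply: no_D5; apply: (has_D5_subgraph_uniq _ e_va' e_vb' e_vx e_xy).
by rewrite /= !inE !negb_or; do ![apply/andP; split]; rewrite // eq_sym.
Qed.

Hypothesis T_big : 4 < #|T|.

Lemma claw_center_adj w : w != v -> e v w.
Proof.
pose N := [pred x | (x == v) || e v x].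
have N_closed : closed e N.
  apply: (intro_closed (sym_connect_sym e_sym)) => x y e_xy; rewrite !inE.
  case/orP=> [/eqP <-|e_vx]; first by rewrite e_xy orbT.
  apply: contraT; rewrite negb_or => /andP[yv n_vy].
  have [a' [b' [e_va' e_vb' a'b'x]]] := claw_nbrs_avoiding x.
  have off_y z : e v z -> y != z by apply: contraTneq => <-.
  exfalso; apply: (no_D5_at e_va' e_vb' e_vx e_xy a'b'x).
  by rewrite !inE !negb_or yv !off_y.
move=> wv; have := closed_connect N_closed (e_conn v w).
by rewrite !inE eqxx (negbTE wv) /= => <-.
Qed.

Lemma claw_leaves_nonadj x y : x != v -> y != v -> ~~ e x y.
Proof.
move=> xv yv; apply/negP => e_xy.
have: 1 < #|[predC [:: v; x; y]]|.
  have split_T : #|[:: v; x; y]| + #|[predC [:: v; x; y]]| = #|T| := cardC _.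
  by move: T_big; rewrite -split_T; have /= := card_size [:: v; x; y]; lia.
case/card_gt1P => a' [b' []]; rewrite !inE !negb_or.
move=> /and3P[a'v a'x a'y] /and3P[b'v b'x b'y] a'b'.
apply: (no_D5_at (claw_center_adj a'v) (claw_center_adj b'v) (claw_center_adj xv) e_xy).
  by rewrite /= !inE !negb_or a'b' a'x b'x.
by rewrite !inE !negb_or yv !(eq_sym y) a'y b'y.
Qed.

Lemma claw_starE x y : e x y = (x == v) (+) (y == v).
Proof.
have [->|xv] := eqVneq x v; have [->|yv] := eqVneq y v.
- by rewrite e_irr.
- by rewrite claw_center_adj.
- by rewrite e_sym claw_center_adj.
- by rewrite (negbTE (claw_leaves_nonadj xv yv)).
Qed.

End Claw.

Theorem lemma1 (T : finType) (e : rel T) :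
  simple_graph e -> connected_graph e -> ~ has_D5_subgraph e ->
  [\/ exists l, 3 <= l /\ graph_iso (cycle_rel l) e,
      exists l, graph_iso (path_rel l) e,
      exists l, 3 <= l /\ graph_iso (star_rel l) e
    | #|T| = 4].
Proof.
move=> [e_sym e_irr] [T_gt0 e_conn] no_D5.
have [[v [a [b [c claw]]]]|no_claw] := classic (has_claw e); last first.
  have /card_gt0P [x0 _] := T_gt0.
  have [m [p p_max]] := exists_maximal_simple_path e x0.
  by case: (claw_free_cycle_or_path e_sym e_irr e_conn no_claw p_max);
    [apply: Or41 | apply: Or42].
have [->|T_ne4] := eqVneq #|T| 4; first exact: Or44.
have T_big : 4 < #|T| by have := claw_card e_irr claw; lia.
apply: Or43; exists #|T|.-1; split; first lia.
exact: star_rel_iso (claw_starE e_sym e_irr e_conn no_D5 claw T_big).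
Qed.
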